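(* Let $T:M_d\to M_d$ be completely positive with $T(I)\le I$ and finite stabilization index $n_T$, and let $Q_T$ be its orbit-support projection. Suppose that for every nonzero projection $0\ne p\le Q_T$ we have $T(p)\ne0$. Then $T$ is corner-faithful, and hence $T$ is unital ($T(I)=I$).
   Context: $d(T)=I-T(I)$; the stabilization index is $n_T=\min\{n\ge1: T^n(d(T))=0\}$. For positive semidefinite $x$, $\mathrm{supp}(x)$ is the orthogonal projection onto the range of $x$. The orbit-support projection is $Q_T=\bigvee_{k<n_T}\mathrm{supp}(T^k(d(T)))$. $T$ is corner-faithful if every $x\ge0$, $x\ne0$ with $\mathrm{supp}(x)\le Q_T$ satisfies $T(x)\ne0$. *)

(* Complex matrix algebra M_d is modelled as 'M[C]_d with
   C an arbitrary numClosedFieldType (e.g. algC, or complex R for R realType).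
   Convention: matrices act on row vectors (v |-> v *m A), as in mathcomp. *)
From HB Require Import structures.
From mathcomp Require Import all_boot all_order all_algebra.
From mathcomp Require Import sesquilinear spectral.
Set Implicit Arguments. Unset Strict Implicit. Unset Printing Implicit Defensive.
Import Order.TTheory GRing.Theory Num.Theory.
Local Open Scope ring_scope.
Local Open Scope sesquilinear_scope.

Section Defs.
Variable C : numClosedFieldType.

Definition psd n (A : 'M[C]_n) : Prop :=
  A ^t* = A /\ forall v : 'rV[C]_n, 0 <= (v *m A *m v ^t*) 0 0.

Definition loewner_le n (A B : 'M[C]_n) : Prop := psd (B - A).

Definition is_proj n (P : 'M[C]_n) : Prop := P *m P = P /\ P ^t* = P.

Definition supp n (x : 'M[C]_n) : 'M[C]_n := proj_ortho x.

Definition pjoin n (P Q : 'M[C]_n) : 'M[C]_n := proj_ortho (P + Q)%MS.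

Definition completely_positive d (T : 'M[C]_d -> 'M[C]_d) : Prop :=
  forall (k : nat) (A : 'I_k -> 'I_k -> 'M[C]_d),
    psd (\mxblock_(i < k, j < k) A i j) ->
    psd (\mxblock_(i < k, j < k) T (A i j)).

Definition defect d (T : 'M[C]_d -> 'M[C]_d) : 'M[C]_d := 1%:M - T 1%:M.

Definition is_stab_index d (T : 'M[C]_d -> 'M[C]_d) (n : nat) : Prop :=
  (1 <= n)%N /\ iter n T (defect T) = 0 /\
  forall m, (1 <= m)%N -> iter m T (defect T) = 0 -> (n <= m)%N.

Definition orbit_supp d (T : 'M[C]_d -> 'M[C]_d) (n : nat) : 'M[C]_d :=
  \big[@pjoin d/0]_(k < n) supp (iter k T (defect T)).

(* corner-faithful (defined when n_T is finite) *)
Definition corner_faithful d (T : 'M[C]_d -> 'M[C]_d) : Prop :=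
  forall n, is_stab_index T n ->
  forall x : 'M[C]_d, psd x -> x <> 0 ->
    loewner_le (supp x) (orbit_supp T n) -> T x <> 0.

End Defs.

(* Complete positivity applied to the positive block matrix
   [[D x D^*, D x], [x D^*, x]] shows that T x = 0 forces T (D x) = 0 for
   every D.  Since supp x = D x for a suitable D, a positive x killed by T has
   its support killed as well, so the hypothesis on projections yields
   corner-faithfulness.  For unitality, x = T^(n_T - 1)(d(T)) is positive
   (d(T) is, and T preserves positivity), T x = 0 and supp x <= Q_T; hence
   x = 0, and minimality of n_T leaves only n_T = 1, i.e. d(T) = 0. *)

From HB Require Import structures.
From mathcomp Require Import all_boot all_order all_algebra.
From mathcomp Require Import sesquilinear spectral.
From mathcomp Require Import ring.
Set Implicit Arguments.
Unset Strict Implicit.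
Unset Printing Implicit Defensive.
Import Order.TTheory GRing.Theory Num.Theory Num.Def.
Local Open Scope ring_scope.
Local Open Scope sesquilinear_scope.

Section PositiveSemidefinite.
Variable C : numClosedFieldType.

Lemma trmxC_mul m n p (A : 'M[C]_(m, n)) (B : 'M[C]_(n, p)) :
  (A *m B)^t* = B^t* *m A^t*.
Proof. by rewrite trmx_mul map_mxM. Qed.

Lemma trmxC1 n : (1%:M : 'M[C]_n)^t* = 1%:M.
Proof. by rewrite trmx1 map_mx1. Qed.

Lemma affine_ge0_slope_eq0 (a c : C) :
  (forall r, r \is Num.real -> 0 <= a + r * c) -> c = 0.
Proof.
move=> ge0.
have a_ge0 : 0 <= a by have := ge0 0 (real0 _); rewrite mul0r addr0.
have cR : c \is Num.real.
  rewrite -(rpredDl c (ger0_real a_ge0)); apply/ger0_real.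
  by rewrite -[c]mul1r ge0 ?rpred1.
have rR : - (a + 1) / c \is Num.real.
  by rewrite rpredM ?rpredV // rpredN rpredD ?rpred1 ?ger0_real.
apply/eqP; apply: contraTT (ge0 _ rR) => c_neq0.
by rewrite divfK // opprD addrA subrr sub0r oppr_ge0 ler10.
Qed.

Lemma affine_conj_ge0_eq0 (a s s' : C) :
  (forall t, 0 <= a + t^* * s + t * s') -> s = 0.
Proof.
move=> ge0.
have /affine_ge0_slope_eq0 sum0 :
    forall r, r \is Num.real -> 0 <= a + r * (s + s').
  by move=> r rR; have := ge0 r; rewrite conj_Creal // mulrDr addrA.
have /affine_ge0_slope_eq0 :
    forall r, r \is Num.real -> 0 <= a + r * ('i * (s' - s)).
  move=> r rR; have := ge0 ('i * r).
  rewrite rmorphM /= (@conjCi C) conj_Creal //.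
  suff -> : a + r * ('i * (s' - s)) = a + - 'i * r * s + 'i * r * s' by [].
  ring.
move/eqP; rewrite mulf_eq0 (negbTE (neq0Ci _)) subr_eq0 => /eqP s'E.
by move/eqP: sum0; rewrite s'E -mulr2n mulrn_eq0 => /eqP.
Qed.

Lemma quadratic_form_eq0 n (A : 'M[C]_n) :
  (forall v, form conjC A v v = 0) -> A = 0.
Proof.
move=> A0; apply/matrixP => i j; rewrite mxE -(formee conjC).
apply: (@affine_conj_ge0_eq0 0 _ (form conjC A 'e_j 'e_i)) => t.
have expand : t^* * form conjC A 'e_i 'e_j + t * form conjC A 'e_j 'e_i = 0.
  rewrite -(A0 ('e_i + t *: 'e_j)) formDl !formDr !formZl !formZr !A0.
  ring.
by rewrite add0r expand.
Qed.

Lemma form_trmxC n (A : 'M[C]_n) v :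
  form conjC (A^t*) v v = (form conjC A v v)^*.
Proof.
rewrite /form; have -> : v *m A^t* *m v^t* = (v *m A *m v^t*)^t*.
  by rewrite !trmxC_mul trmxCK mulmxA.
by rewrite !mxE.
Qed.

Lemma psd_form_ge0 n (A : 'M[C]_n) : psd A -> forall v, 0 <= form conjC A v v.
Proof. by case. Qed.

Lemma form_ge0_psd n (A : 'M[C]_n) :
  (forall v, 0 <= form conjC A v v) -> psd A.
Proof.
move=> A_ge0; split=> //; apply/eqP; rewrite -subr_eq0.
apply/eqP/quadratic_form_eq0 => v.
rewrite /form mulmxBr mulmxBl [LHS]mxE [X in _ + X]mxE -!/(form _ _ _ _).
by rewrite form_trmxC conj_Creal ?subrr ?ger0_real.
Qed.

Lemma proj_psd n (P : 'M[C]_n) : is_proj P -> psd P.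
Proof.
case=> PP Ph; apply: form_ge0_psd => v.
by rewrite /form -{1}PP -{2}Ph mulmxA -mulmxA -trmxC_mul -dotmxE dnorm_ge0.
Qed.

Lemma form_mxblock k d (B : 'I_k -> 'I_k -> 'M[C]_d) (V : 'I_k -> 'rV[C]_d) :
  form conjC (\mxblock_(i < k, j < k) B i j) (\mxrow_i V i) (\mxrow_i V i)
  = \sum_i \sum_j form conjC (B i j) (V i) (V j).
Proof.
rewrite /form; have -> : (\mxrow_i V i)^t* = \mxcol_i (V i)^t*.
  by rewrite tr_mxrow; apply/matrixP => a b; rewrite !mxE.
rewrite mul_mxrow_mxblock mul_mxrow_mxcol summxE.
rewrite exchange_big; apply: eq_bigr => j _.
by rewrite mulmx_suml summxE.
Qed.

Lemma psd_mxblock_conj k d (x : 'M[C]_d) (a : 'I_k -> 'M[C]_d) :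
  psd x -> psd (\mxblock_(i < k, j < k) (a i *m x *m (a j)^t*)).
Proof.
move=> /psd_form_ge0 x_ge0; apply: form_ge0_psd => v.
rewrite -(submxrowK v) form_mxblock; set w := \sum_i submxrow v i *m a i.
suff -> : \sum_i \sum_j
    form conjC (a i *m x *m (a j)^t*) (submxrow v i) (submxrow v j)
  = form conjC x w w by exact: x_ge0.
rewrite /form /w !mulmx_suml summxE; apply: eq_bigr => i _.
rewrite !raddf_sum summxE; apply: eq_bigr => j _ /=.
by rewrite trmxC_mul !mulmxA.
Qed.

Lemma psd_mxblock2_offdiag d (B : 'I_2 -> 'I_2 -> 'M[C]_d) :
  psd (\mxblock_(i < 2, j < 2) B i j) -> B ord_max ord_max = 0 ->
  B ord0 ord_max = 0.
Proof.
move=> /psd_form_ge0 B_ge0 B11.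
apply/matrixP => i j; rewrite mxE -(formee conjC).
apply: (@affine_conj_ge0_eq0 (form conjC (B ord0 ord0) 'e_i 'e_i) _
  (form conjC (B ord_max ord0) 'e_j 'e_i)) => t.
have lift1 : lift ord0 (ord0 : 'I_1) = ord_max :> 'I_2 by apply/val_inj.
have := B_ge0 (\mxrow_k (if k == ord0 then 'e_i else t *: 'e_j)).
rewrite form_mxblock !big_ord_recl !big_ord0 !addr0 lift1 /=.
by rewrite (form0_eq0 conjC B11) addr0 formZl formZr.
Qed.

End PositiveSemidefinite.

Section Projections.
Variable C : numClosedFieldType.

Lemma trmxC_proj_ortho m n (U : 'M[C]_(m, n)) :
  (proj_ortho U)^t* = proj_ortho U.
Proof.
have /orthomx1P := proj_ortho_compl_sub U 1%:M; rewrite mul1mx.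
have /submxP[D] := proj_ortho_sub U 1%:M; rewrite mul1mx.
move: (proj_ortho U) => P PE compl_orth.
have : (1%:M - P) *m P^t* = 0.
  by rewrite [in P^t*]PE trmxC_mul mulmxA compl_orth mul0mx.
move/eqP; rewrite mulmxBl mul1mx subr_eq0 => /eqP PtE.
by rewrite -[RHS]trmxCK [in RHS]PtE trmxC_mul trmxCK -PtE.
Qed.

Lemma proj_ortho_is_proj m n (U : 'M[C]_(m, n)) : is_proj (proj_ortho U).
Proof. by split; [exact: proj_ortho_proj | exact: trmxC_proj_ortho]. Qed.

Lemma supp_eq0 n (x : 'M[C]_n) : (supp x == 0) = (x == 0).
Proof. exact: eqmx_eq0 (proj_orthoE x). Qed.

Lemma proj_loewner_le n (P Q : 'M[C]_n) :
  is_proj P -> is_proj Q -> (P <= Q)%MS -> loewner_le P Q.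
Proof.
case=> PP Ph [QQ Qh] /submxP[D PE].
have PQ : P *m Q = P by rewrite {1}PE -mulmxA QQ -PE.
have QP : Q *m P = P by rewrite -{1}Qh -{1}Ph -trmxC_mul PQ Ph.
apply: proj_psd; split; last by rewrite linearB map_mxB /= Qh Ph.
by rewrite mulmxBl !mulmxBr QQ QP PQ PP subrr subr0.
Qed.

Lemma big_pjoin_eqmx n I (r : seq I) (P : pred I) (F : I -> 'M[C]_n) :
  (\big[@pjoin C n/0]_(i <- r | P i) F i :=: \sum_(i <- r | P i) F i)%MS.
Proof.
elim/big_rec2: _ => [|i A B _ AB]; first exact: eqmx_refl.
exact: eqmx_trans (proj_orthoE _) (adds_eqmx (eqmx_refl _) AB).
Qed.

Lemma big_pjoin_is_proj n I (r : seq I) (P : pred I) (F : I -> 'M[C]_n) :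
  is_proj (\big[@pjoin C n/0]_(i <- r | P i) F i).
Proof.
elim/big_rec: _ => [|i A _ _]; last exact: proj_ortho_is_proj.
by split; rewrite ?mulmx0 // trmx0 map_mx0.
Qed.

End Projections.

Section StabilizationIndex.
Variables (C : numClosedFieldType) (d : nat) (T : 'M[C]_d -> 'M[C]_d).

Lemma stab_index_unique m n : is_stab_index T m -> is_stab_index T n -> m = n.
Proof.
move=> [m_ge1 [Tm_0 m_min]] [n_ge1 [Tn_0 n_min]].
by apply/eqP; rewrite eqn_leq m_min ?n_min.
Qed.

Lemma orbit_supp_is_proj n : is_proj (orbit_supp T n).
Proof. exact: big_pjoin_is_proj. Qed.

Lemma orbit_supp_ub n k :
  (k < n)%N -> (iter k T (defect T) <= orbit_supp T n)%MS.
Proof.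
move=> lt_kn; rewrite /orbit_supp big_pjoin_eqmx.
by rewrite (sumsmx_sup (Ordinal lt_kn)) // /supp proj_orthoE.
Qed.

End StabilizationIndex.

Section CompletelyPositive.
Variables (C : numClosedFieldType) (d : nat) (T : 'M[C]_d -> 'M[C]_d).
Hypothesis cpT : completely_positive T.

Lemma cp_psd x : psd x -> psd (T x).
Proof.
move=> x_psd; have := psd_mxblock_conj (fun _ : 'I_1 => 1%:M) x_psd.
rewrite trmxC1 mul1mx mulmx1 => /cpT /psd_form_ge0 Tx_ge0.
apply: form_ge0_psd => v; have := Tx_ge0 (\mxrow_(i < 1) v).
by rewrite form_mxblock !big_ord1.
Qed.

Lemma cp_kernel_mulmx x D : psd x -> T x = 0 -> T (D *m x) = 0.
Proof.
move=> x_psd Tx0.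
have := psd_mxblock_conj (fun i : 'I_2 => if i == ord0 then D else 1%:M) x_psd.
move=> /cpT /psd_mxblock2_offdiag /=; rewrite trmxC1 mul1mx !mulmx1; exact.
Qed.

Lemma cp_supp_kernel x : psd x -> T x = 0 -> T (supp x) = 0.
Proof.
have /submxP[D ->] : (supp x <= x)%MS by rewrite /supp proj_orthoE.
exact: cp_kernel_mulmx.
Qed.

Lemma iter_defect_psd :
  loewner_le (T 1%:M) 1%:M -> forall k, psd (iter k T (defect T)).
Proof. by move=> defect_psd; elim=> //= k; apply: cp_psd. Qed.

Lemma corner_faithful_of_proj n : is_stab_index T n ->
  (forall p, is_proj p -> p <> 0 ->
     loewner_le p (orbit_supp T n) -> T p <> 0) ->
  corner_faithful T.
Proof.
move=> n_stab Tp_neq0 m m_stab x x_psd x_neq0.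
rewrite (stab_index_unique m_stab n_stab) => supp_le Tx0.
apply: (Tp_neq0 _ (proj_ortho_is_proj x) _ supp_le (cp_supp_kernel x_psd Tx0)).
by move/eqP; rewrite supp_eq0 => /eqP.
Qed.

Lemma corner_faithful_unital n :
  loewner_le (T 1%:M) 1%:M -> is_stab_index T n -> corner_faithful T ->
  T 1%:M = 1%:M.
Proof.
move=> T1_le n_stab cfT; have [n_ge1 [Tn_0 n_min]] := n_stab.
case: n n_ge1 Tn_0 n_min n_stab => [//|m] _ Tm_0 n_min n_stab.
have [|/eqP x_neq0] := eqVneq (iter m T (defect T)) 0.
  case: m {n_stab Tm_0} n_min => [_ /eqP|m n_min /(n_min m.+1 isT)].
    by rewrite subr_eq0 eq_sym => /eqP.
  by rewrite ltnn.
have supp_le : loewner_le (supp (iter m T (defect T))) (orbit_supp T m.+1).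
  apply: proj_loewner_le (proj_ortho_is_proj _) (orbit_supp_is_proj _ _) _.
  by rewrite /supp proj_orthoE orbit_supp_ub.
by case: (cfT _ n_stab _ (iter_defect_psd T1_le m) x_neq0 supp_le).
Qed.

End CompletelyPositive.

Theorem proposition4p20 (C : numClosedFieldType) (d : nat)
  (T : {linear 'M[C]_d -> 'M[C]_d}) (nT : nat) :
  completely_positive T ->
  loewner_le (T 1%:M) 1%:M ->
  is_stab_index T nT ->
  (forall p : 'M[C]_d, is_proj p -> p <> 0 ->
     loewner_le p (orbit_supp T nT) -> T p <> 0) ->
  corner_faithful T /\ T 1%:M = 1%:M.
Proof.
move=> cpT T1_le nT_stab Tp_neq0.
have cfT := corner_faithful_of_proj cpT nT_stab Tp_neq0.
split=> //; exact: (corner_faithful_unital cpT T1_le nT_stab cfT).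
Qed.
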